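(* Let $A_n=1$ if $n=2^{k+1}-2$ for some integer $k\ge0$ and $A_n=0$ otherwise, let $D(n)=\det\left(A_{i+j}\right)_{i,j=0}^{n-1}$ for $n\ge1$, $D(0)=1$ (so $D(n)\in\{1,-1\}$), and let $T_n=D(n)D(n+2)$ for $n\ge0$. Then: (i) for every $k\ge2$ and every $n$ with $2^k\le n\le 2^{k+1}-3$, $T_n=T_{2^{k+1}-3-n}$; (ii) $T_{4n}=(-1)^n$ for all $n\ge0$; (iii) $T_{2^{k+1}n+2^k-2}=(-1)^{n+1}$ for all $n\ge0$ and all $k\ge2$.
   Context: Also $T_0=1$ and $T_1=-1$. *)

From mathcomp Require Import all_boot all_order all_algebra.
Set Implicit Arguments. Unset Strict Implicit. Unset Printing Implicit Defensive.
Import GRing.Theory Num.Theory.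
Local Open Scope ring_scope.

(* isA n <=> n = 2^(k+1) - 2 for some k >= 0.  Any such k satisfies k <= n,
   so the search over k < n.+2 is exhaustive. *)
Definition isA (n : nat) : bool := [exists k : 'I_n.+2, (2 ^ k.+1 - 2)%N == n].

Definition A (n : nat) : int := if isA n then 1 else 0.

(* Hankel determinant; for n = 0 the determinant of the empty matrix is 1. *)
Definition D (n : nat) : int := \det (\matrix_(i < n, j < n) A (i + j)%N).

Definition T (n : nat) : int := D n * D n.+2.

From mathcomp Require Import all_boot all_order all_algebra.
From mathcomp Require Import zify.
Set Implicit Arguments. Unset Strict Implicit. Unset Printing Implicit Defensive.
Import GRing.Theory Num.Theory.
Local Open Scope ring_scope.

(* For 2^a <= n < 2^(a+1) the only nonzero entry of the Hankel matrix of
   order n on its last row (and column) is A_(2^(a+1)-2), sitting in column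
   c = 2^(a+1)-1-n.  Expanding along that row and then along the new last
   column deletes two rows and two columns and leaves a Hankel-type minor of
   the same shape, so after (n-1-c)/2 such steps only the leading c x c block
   survives: D(n) = +-D(2^(a+1)-1-n).  Dyadic induction turns this reflection
   into D(2n+1) = (-1)^n D(2n), D(2n) = (-1)^(n/2) D(n) and D(n)^2 = 1, which
   yield recursions for T_(2m) and for D(m)D(m+1) from which (ii) and (iii)
   follow; (i) is the reflection applied to D(n) and D(n+2). *)

Lemma signr_eq (R : pzRingType) m n :
  ~~ odd (m + n) -> (-1) ^+ m = (-1) ^+ n :> R.
Proof.
by rewrite -signr_odd -[RHS]signr_odd oddD; case: (odd m); case: (odd n).
Qed.

Lemma pow2S a : (2 ^ a.+1 = (2 ^ a).*2)%N.
Proof. by rewrite expnS mul2n. Qed.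

Lemma dyadic_ind (P : nat -> Prop) : P 0%N ->
  (forall a n, (2 ^ a <= n < 2 ^ a.+1)%N -> (forall m, (m < n)%N -> P m) -> P n) ->
  forall n, P n.
Proof.
move=> P0 IH; elim/ltn_ind => -[|n] // IHn.
exact: (IH (trunc_log 2 n.+1) _ (trunc_log_bounds _ _)).
Qed.

Section DetFun.

Variable R : comPzRingType.

Definition det_fn n (g : nat -> nat -> R) := \det (\matrix_(i < n, j < n) g i j).

Lemma eq_det_fn n g1 g2 :
  (forall i j, (i < n)%N -> (j < n)%N -> g1 i j = g2 i j) ->
  det_fn n g1 = det_fn n g2.
Proof. by move=> eq_g; congr (\det _); apply/matrixP => i j; rewrite !mxE eq_g. Qed.

Lemma det_fn_tr n g : det_fn n g = det_fn n (fun i j => g j i).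
Proof. by rewrite /det_fn -det_tr; congr (\det _); apply/matrixP => i j; rewrite !mxE. Qed.

Lemma det_fn_unit_row m p g : (p <= m)%N ->
  (forall j, (j <= m)%N -> g m j = (j == p)%:R) ->
  det_fn m.+1 g = (-1) ^+ (m + p) * det_fn m (fun i j => g i (bump p j)).
Proof.
move=> le_pm g_m; pose p' := Ordinal (le_pm : (p < m.+1)%N).
rewrite /det_fn (expand_det_row _ ord_max) (bigD1 p') //= big1 => [|j /negbTE ne_jp].
  rewrite mxE g_m // eqxx mul1r addr0 /cofactor; congr (_ * \det _).
  by apply/matrixP => i j; rewrite !mxE /= /bump (leqNgt m i) ltn_ord.
rewrite mxE g_m ?leq_ord //.
by have -> : (j == p :> nat) = false by []; rewrite mul0r.
Qed.

Lemma det_fn_unit_col m p g : (p <= m)%N ->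
  (forall i, (i <= m)%N -> g i m = (i == p)%:R) ->
  det_fn m.+1 g = (-1) ^+ (m + p) * det_fn m (fun i j => g (bump p i) j).
Proof. by move=> le_pm g_m; rewrite det_fn_tr (@det_fn_unit_row m p) // det_fn_tr. Qed.

End DetFun.

Lemma A_pow2 a x : (x + 2 = 2 ^ a.+1)%N -> A x = 1.
Proof.
move=> def_x; rewrite /A ifT //; apply/existsP.
have lt_a : (a < x.+2)%N by rewrite -addn2 def_x ltnW // ltn_expl.
by exists (Ordinal lt_a) => /=; apply/eqP; lia.
Qed.

Lemma A_gap a x : (2 ^ a < x + 2 < 2 ^ a.+1)%N -> A x = 0.
Proof.
move=> /andP[lo hi]; rewrite /A ifF //; apply/negbTE/existsP => -[k /eqP def_x].
have pos_k : (2 <= 2 ^ k.+1)%N by rewrite (leq_exp2l 1).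
have {}def_x : (x + 2 = 2 ^ k.+1)%N by lia.
by rewrite def_x !ltn_exp2l // in lo hi; lia.
Qed.

(* [split_index h c j] enumerates 0, .., c-1 followed by h-1-j, .., h-1+j. *)
Definition split_index h c j i : nat :=
  if (i < c)%N then i else (i - c + (h - 1 - j))%N.

Lemma split_index_bump h c j i : (j.+1 < h)%N ->
  split_index h c j.+1 (bump c i) = split_index h c j i.
Proof. by rewrite /split_index /bump; case: leqP => /= ? ?; case: ifP; case: ifP; lia. Qed.

Lemma A_split_last_row a c j k : (c + j < 2 ^ a)%N -> (k <= j.*2 + c)%N ->
  A (split_index (2 ^ a) c j (j.*2 + c) + split_index (2 ^ a) c j k) = (k == c)%:R.
Proof.
move=> lt_cj le_k; have := pow2S a; have := pow2S a.+1; have := expn_gt0 2 a => *.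
rewrite [split_index _ _ _ (_ + c)]/split_index ifF; last by lia.
rewrite /split_index; case: (ltngtP k c) => [lt_kc|lt_ck|->] /=.
- by rewrite (@A_gap a) //; lia.
- by rewrite (@A_gap a.+1) //; lia.
- by rewrite ?ltnn (@A_pow2 a) //; lia.
Qed.

Lemma D_det_fn n : D n = det_fn n (fun i j => A (i + j)).
Proof. by []. Qed.

Lemma det_A_split a c j : (c + j < 2 ^ a)%N ->
  det_fn (j.*2 + c).+1
    (fun i k => A (split_index (2 ^ a) c j i + split_index (2 ^ a) c j k))
  = (-1) ^+ j * D c.
Proof.
elim: j => [|j IH] lt_cj.
  rewrite (@det_fn_unit_row _ c c) //; last by move=> k; apply: (@A_split_last_row a c 0).
  rewrite (@signr_eq _ _ 0) ?D_det_fn; last by lia.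
  congr (_ * _); apply: eq_det_fn => i k lt_ic lt_kc.
  by rewrite /split_index /bump (leqNgt c k) lt_kc /= lt_ic lt_kc.
rewrite (@det_fn_unit_row _ _ c); last 2 first.
- by lia.
- by move=> k; apply: A_split_last_row.
rewrite (@det_fn_unit_col _ (j.*2 + c).+1 c); last 2 first.
- by lia.
- move=> i le_i; have -> : bump c (j.*2 + c).+1 = (j.+1).*2 + c by rewrite /bump; lia.
  by rewrite addnC; apply: A_split_last_row; lia.
rewrite mulrA -exprD (@signr_eq _ _ 1); last by lia.
rewrite expr1 exprS -mulrA -IH; last by lia.
by congr (_ * _); apply: eq_det_fn => i k _ _; rewrite !split_index_bump //; lia.
Qed.

Lemma D_reflect a n : (2 ^ a <= n < 2 ^ a.+1)%N ->
  D n = (-1) ^+ (n - 2 ^ a) * D (2 ^ a.+1 - 1 - n).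
Proof.
move=> /andP[lo hi]; have := pow2S a => *.
rewrite -(@det_A_split a); last by lia.
have {1}-> : n = ((n - 2 ^ a).*2 + (2 ^ a.+1 - 1 - n)).+1 by lia.
rewrite D_det_fn; apply: eq_det_fn => i k _ _.
by congr (A (_ + _)); rewrite /split_index; case: ifP; lia.
Qed.

Lemma D0 : D 0 = 1.
Proof. exact: det_mx00. Qed.

Lemma D_sqr n : D n ^+ 2 = 1.
Proof.
elim/dyadic_ind: n => [|a n bnd IH]; first by rewrite D0 expr1n.
have := pow2S a; have := expn_gt0 2 a => *.
by rewrite (D_reflect bnd) exprMn sqrr_sign mul1r IH //; lia.
Qed.

Lemma D_doubleS n : D n.*2.+1 = (-1) ^+ n * D n.*2.
Proof.
elim/dyadic_ind: n => [|a n bnd IH]; first by rewrite (@D_reflect 0).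
have := pow2S a; have := pow2S a.+1 => *.
rewrite (@D_reflect a.+1 n.*2.+1) ?(@D_reflect a.+1 n.*2); try by lia.
have -> : (2 ^ a.+2 - 1 - n.*2 = (2 ^ a.+1 - 1 - n).*2.+1)%N by lia.
have -> : (2 ^ a.+2 - 1 - n.*2.+1 = (2 ^ a.+1 - 1 - n).*2)%N by lia.
rewrite IH ?mulrA -?exprD; last by lia.
by congr (_ * _); apply: signr_eq; lia.
Qed.

Lemma D_double n : D n.*2 = (-1) ^+ n./2 * D n.
Proof.
elim/dyadic_ind: n => [|a n bnd IH]; first by rewrite expr0 mul1r.
have := pow2S a; have := pow2S a.+1 => *.
rewrite (@D_reflect a.+1 n.*2) ?(D_reflect bnd); try by lia.
have -> : (2 ^ a.+2 - 1 - n.*2 = (2 ^ a.+1 - 1 - n).*2.+1)%N by lia.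
rewrite D_doubleS IH ?mulrA -?exprD; last by lia.
by congr (_ * _); apply: signr_eq; lia.
Qed.

Definition T1 (n : nat) : int := D n * D n.+1.

Lemma T1_double n : T1 n.*2 = (-1) ^+ n.
Proof. by rewrite /T1 D_doubleS mulrCA -expr2 D_sqr mulr1. Qed.

Lemma T1_doubleS n : T1 n.*2.+1 = T1 n.
Proof.
rewrite /T1 D_doubleS -doubleS !D_double mulrACA !mulrA -!exprD.
by rewrite (@signr_eq _ _ 0) ?mul1r //; lia.
Qed.

Lemma T_double n : T n.*2 = (-1) ^+ n * T1 n.
Proof.
rewrite /T /T1 -doubleS !D_double mulrACA -exprD.
by congr (_ * _); apply: signr_eq; lia.
Qed.

Lemma T1_pow2 a n : T1 (2 ^ a.+1 * n + 2 ^ a - 1) = (-1) ^+ n.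
Proof.
elim: a => [|a IH]; first by rewrite (_ : _ - 1 = n.*2)%N ?T1_double //; lia.
have := pow2S a; have := pow2S a.+1; have := expn_gt0 2 a => *.
by rewrite (_ : _ - 1 = (2 ^ a.+1 * n + 2 ^ a - 1).*2.+1)%N ?T1_doubleS //; lia.
Qed.

Lemma T_reflect k n : (2 ^ k <= n <= 2 ^ k.+1 - 3)%N ->
  T n = T (2 ^ k.+1 - 3 - n).
Proof.
move=> /andP[lo hi]; have := pow2S k; have := expn_gt0 2 k => *.
rewrite /T (@D_reflect k n) ?(@D_reflect k n.+2); try by lia.
have -> : (2 ^ k.+1 - 1 - n.+2 = 2 ^ k.+1 - 3 - n)%N by lia.
have -> : ((2 ^ k.+1 - 3 - n).+2 = 2 ^ k.+1 - 1 - n)%N by lia.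
rewrite mulrACA -exprD (@signr_eq _ _ 0) ?mul1r 1?mulrC //; lia.
Qed.

Lemma T_mul4 n : T (4 * n) = (-1) ^+ n.
Proof.
rewrite (_ : 4 * n = n.*2.*2)%N; last by lia.
by rewrite T_double T1_double -exprD (@signr_eq _ _ n) //; lia.
Qed.

Lemma T_pow2 k n : T (2 ^ k.+3 * n + 2 ^ k.+2 - 2) = (-1) ^+ n.+1.
Proof.
have := pow2S k; have := pow2S k.+1; have := pow2S k.+2; have := expn_gt0 2 k => *.
rewrite (_ : _ - 2 = (2 ^ k.+1 * n + 2 ^ k - 1).*2.+1.*2)%N; last by lia.
by rewrite T_double T1_doubleS T1_pow2 -exprD; apply: signr_eq; lia.
Qed.

Theorem theorem2p7 :
  (forall k n : nat, (2 <= k)%N -> (2 ^ k <= n)%N -> (n <= 2 ^ k.+1 - 3)%N ->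
     T n = T (2 ^ k.+1 - 3 - n)%N)
  /\ (forall n : nat, T (4 * n)%N = (-1) ^+ n)
  /\ (forall n k : nat, (2 <= k)%N ->
        T (2 ^ k.+1 * n + 2 ^ k - 2)%N = (-1) ^+ n.+1).
Proof.
split; [|split]; first by move=> k n _ lo hi; apply: T_reflect; rewrite lo hi.
- exact: T_mul4.
- by move=> n [|[|k]] // _; apply: T_pow2.
Qed.
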